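(* Let $m\geq 2$ be an integer and let $\delta$ be a real number with $0\leq\delta<\frac{1}{2m}\left(\frac12-\frac{1}{2^m-1}\right)$. Then there exists a sequence of binary $[[N_i,k_i,d_i]]$ stabilizer codes with $N_i\to\infty$, $$\liminf_{i\to\infty}\frac{k_i}{N_i}\geq R_m^{(\mathrm{ALT})}(\delta):=1-\frac{10}{3}m\delta-\frac{2}{2^m-1},\qquad \liminf_{i\to\infty}\frac{d_i}{N_i}\geq\delta.$$
   Context: A binary $[[n,k,d]]$ stabilizer code is given by an $(n+k)$-dimensional subspace $C\subseteq\mathbf{F}_2^{2n}$ with $C^{\perp\mathrm s}\subseteq C$, where $\langle\vec x,\vec y\rangle_{\mathrm s}=\sum_{i=1}^n x_iy_{n+i}-\sum_{i=1}^n x_{n+i}y_i$ and $C^{\perp\mathrm s}$ is the orthogonal complement of $C$ with respect to this form; its minimum distance $d$ is $\min\{w(\vec x)\mid \vec x\in C\setminus C^{\perp\mathrm s}\}$ with $w(\vec x)=\#\{1\le i\le n\mid (x_i,x_{n+i})\neq(0,0)\}$. *)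

From HB Require Import structures.
From mathcomp Require Import all_boot all_order all_algebra.
From mathcomp Require Import reals.
Set Implicit Arguments. Unset Strict Implicit. Unset Printing Implicit Defensive.
Import Order.TTheory GRing.Theory Num.Theory.
Local Open Scope ring_scope.

(* Vectors of F_2^{2n} are row vectors 'rV['F_2]_(n + n);
   coordinate x_i (1 <= i <= n) is x (lshift n i), coordinate x_{n+i} is x (rshift n i). *)
Notation F2 := 'F_2.
Notation vec n := 'rV[F2]_(n + n).

Definition xc n (x : vec n) (i : 'I_n) : F2 := x 0 (lshift n i).
Definition zc n (x : vec n) (i : 'I_n) : F2 := x 0 (rshift n i).

Definition symp n (x y : vec n) : F2 :=
  \sum_(i < n) xc x i * zc y i - \sum_(i < n) zc x i * xc y i.

Definition in_sperp n (C : {vspace vec n}) (x : vec n) : Prop :=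
  forall y : vec n, y \in C -> symp x y = 0.

Definition sweight n (x : vec n) : nat :=
  #|[set i : 'I_n | (xc x i, zc x i) != (0, 0)]|.

Definition stabilizer_code n (k d : nat) (C : {vspace vec n}) : Prop :=
  [/\ \dim C = (n + k)%N,
      (forall x : vec n, in_sperp C x -> x \in C),
      (exists2 x : vec n, x \in C /\ ~ in_sperp C x & sweight x = d) &
      (forall x : vec n, x \in C -> ~ in_sperp C x -> (d <= sweight x)%N)].

From HB Require Import structures.
From mathcomp Require Import all_boot all_order all_algebra.
From mathcomp Require Import reals.
From mathcomp Require Import zify ring lra.
Set Implicit Arguments. Unset Strict Implicit. Unset Printing Implicit Defensive.
Import Order.TTheory GRing.Theory Num.Theory.

(* The codes are CSS codes: for an (s + k) x n matrix G with n = 2s + k and H its first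
   s rows, take X-parts in row(G) and Z-parts in row(H)^perp.  This is an [[n, k]]
   stabilizer code whose nonzero codewords have symplectic weight > e as soon as no
   nonzero vector of row(G) or of row(H)^perp has Hamming weight <= e, and a union bound
   shows that some G has this property once 2 |B(n, e)| < 2^s.  Weighting each zero
   coordinate by 2^(m+1) - 1 gives |B(n, e)| <= 2^((m+1) e + n / 2^m + 1), so
   s ~ (m+1) delta n + n / 2^m suffices, and the rate 1 - 2s/n is at least
   R_m^(ALT)(delta) because 2 (m+1) <= 10 m / 3. *)

Definition wH n (v : 'rV[F2]_n) : nat := #|[set i | v ord0 i != 0%R]|.

Definition hamming_ball n e := [set v : 'rV[F2]_n | wH v <= e].

(* Expanding (a + 1)^n gives the sum over all words f of a^(number of zeros of f);
   a word of the ball has at least n - e zeros. *)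
Lemma card_hamming_ball_mul_expn n e a : 0 < a ->
  #|hamming_ball n e| * a ^ (n - e) <= (a + 1) ^ n.
Proof.
move=> a_gt0.
pose toF (v : 'rV[F2]_n) := [ffun i => v ord0 i].
have toF_inj : injective toF.
  by move=> v w /ffunP E; apply/rowP => i; have := E i; rewrite !ffunE.
pose zeros (f : {ffun 'I_n -> F2}) := [set i | f i == 0%R].
pose Sf := [set f : {ffun 'I_n -> F2} | #|~: zeros f| <= e].
have ball_Sf : #|hamming_ball n e| <= #|Sf|.
  rewrite -(card_imset _ toF_inj); apply/subset_leq_card/subsetP => f.
  case/imsetP=> v; rewrite !inE => vB ->; move: vB; rewrite /wH.
  by congr (_ <= _); apply: eq_card => i; rewrite !inE ffunE.
have expand : (a + 1) ^ n = \sum_f a ^ #|zeros f|.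
  rewrite -[n in LHS]card_ord -prod_nat_const.
  have -> : \prod_(i < n) (a + 1) =
            \prod_(i < n) \sum_(b : F2) (if b == 0%R then a else 1).
    apply: eq_bigr => i _; rewrite (bigD1 0%R) //= (bigD1 1%R) //= big1 ?addn0 //.
    by case=> [[|[|]]].
  rewrite bigA_distr_bigA; apply: eq_bigr => f _.
  rewrite (bigID (fun i => f i == 0%R)) /= [X in _ * X]big1 ?muln1; last first.
    by move=> i /negbTE ->.
  rewrite (eq_bigr (fun _ => a)) => [|i -> //].
  by rewrite -prod_nat_const; apply: eq_bigl => i; rewrite inE.
rewrite expand (bigID (mem Sf)) /= -[X in X <= _]addn0 leq_add //.
apply: leq_trans (leq_mul ball_Sf (leqnn _)) _.
rewrite -sum_nat_const; apply: leq_sum => f; rewrite inE => fS.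
apply: leq_pexp2l => //; have := cardsC (zeros f); rewrite card_ord; move: fS.
by set z := #|zeros f|; lia.
Qed.

Lemma expn_mul_subn_le b t : t <= b -> b ^ t * (b - t) <= (b - 1) ^ t * b.
Proof.
elim: t => [|t IH] ht; first by rewrite !expn0 subn0.
have {}IH := IH (ltnW ht).
rewrite !expnS -!mulnA.
apply: (@leq_trans ((b - 1) * (b ^ t * (b - t)))); last by rewrite leq_mul2l IH orbT.
rewrite mulnCA [X in _ <= X]mulnCA leq_mul2l; nia.
Qed.

(* Over each block of r exponents, (2r / (2r - 1))^r <= 2r / r = 2. *)
Lemma expn_double_le_pred r t : 0 < r ->
  (2 * r) ^ t <= (2 * r - 1) ^ t * 2 ^ (t %/ r).+1.
Proof.
move=> r_gt0; set b := 2 * r.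
have block u : u <= r -> b ^ u <= 2 * (b - 1) ^ u.
  move=> le_ur; have := expn_mul_subn_le (b:=b) (t:=u) ltac:(lia).
  have : r <= b - u by lia.
  move: (b ^ u) ((b - 1) ^ u) => X Y h1 h2.
  have := leq_trans (leq_mul (leqnn X) h1) h2; nia.
rewrite {1 2}(divn_eq t r) !expnD [_ ^ (t %/ r).+1]expnS.
set q := t %/ r; set rm := t %% r.
rewrite !(mulnC q r) !expnM.
have hr := block r (leqnn r).
have hrm := block rm (ltnW (ltn_pmod t r_gt0)).
apply: (@leq_trans ((2 * (b - 1) ^ r) ^ q * (2 * (b - 1) ^ rm))).
  by apply: leq_mul => //; case: q => [|q] //; rewrite leq_exp2r.
rewrite expnMn; nia.
Qed.

Lemma card_hamming_ball_le r n e : 0 < r ->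
  #|hamming_ball n e| <= (2 * r) ^ e * 2 ^ (n %/ r).+1.
Proof.
move=> r_gt0; set a := 2 * r - 1.
have a_gt0 : 0 < a by rewrite /a; lia.
have aS : a + 1 = 2 * r by rewrite /a; lia.
have := card_hamming_ball_mul_expn n e a_gt0; rewrite aS => ball_le.
rewrite -(@leq_pmul2r (a ^ (n - e))) ?expn_gt0 ?a_gt0 //.
apply: (leq_trans ball_le).
have split_n : (2 * r) ^ n <= (2 * r) ^ e * (2 * r) ^ (n - e).
  by rewrite -expnD leq_pexp2l //; lia.
apply: (leq_trans split_n); rewrite -mulnA leq_mul2l [X in _ <= X]mulnC.
apply/orP; right; apply: (leq_trans (expn_double_le_pred (n - e) r_gt0)).
by rewrite leq_mul2l leq_pexp2l ?orbT // ltnS leq_div2r ?leq_subr.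
Qed.

(* All fibres of a surjective additive map are translates of its kernel. *)
Lemma card_preimset_additive (T W : finZmodType) (phi : T -> W) (S : {set W}) :
  {morph phi : x y / (x + y)%R} -> (forall w, exists x, phi x = w) ->
  #|[set x | phi x \in S]| * #|W| = #|S| * #|T|.
Proof.
move=> phiD phi_onto.
have card_fibre w : #|[set x | phi x == w]| = #|[set x | phi x == 0%R]|.
  have [x0 <-] := phi_onto w.
  rewrite -[RHS](card_imset _ (addIr x0)); apply: eq_card => x; rewrite inE.
  apply/idP/imsetP => [/eqP phix|[y]]; last first.
    by rewrite inE => /eqP phiy ->; rewrite phiD phiy add0r.
  exists (x - x0)%R; rewrite ?subrK // inE.
  by apply/eqP/(@addIr _ (phi x0)); rewrite -phiD subrK add0r.
have card_preim (A : {set W}) :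
    #|[set x | phi x \in A]| = #|A| * #|[set x | phi x == 0%R]|.
  rewrite -sum1_card (partition_big phi (mem A)) => [|x]; last by rewrite inE.
  rewrite -sum_nat_const; apply: eq_bigr => w wA.
  rewrite -(card_fibre w) -sum1_card; apply: eq_bigl => x; rewrite !inE.
  by apply/andP/eqP => [[_ /eqP]|->].
have cardT : #|T| = #|W| * #|[set x | phi x == 0%R]|.
  by rewrite -(cardsT W) -card_preim; apply: eq_card => x; rewrite !inE.
by rewrite card_preim cardT mulnAC mulnA.
Qed.

Lemma card_cover_le (I T : finType) (P : I -> pred T) (A : {set T}) :
  (forall x, x \in A -> exists i, P i x) ->
  #|A| <= \sum_i #|[set x | P i x]|.
Proof.
move=> cover.
have card_P i : #|[set x | P i x]| = \sum_x P i x.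
  by rewrite -sum1_card big_mkcond; apply: eq_bigr => x _; rewrite inE; case: (P i x).
under eq_bigr do rewrite card_P.
rewrite exchange_big -sum1_card big_mkcond; apply: leq_sum => x _.
by case: ifP => // /cover [i Pix]; rewrite (bigD1 i) //= Pix.
Qed.

Lemma card_exists_preimset_le (I : finType) (T W : finZmodType) (P : pred I)
    (phi : I -> T -> W) (S : {set W}) :
  (forall i, P i -> {morph phi i : x y / (x + y)%R}) ->
  (forall i, P i -> forall w, exists x, phi i x = w) ->
  #|[set x | [exists i, P i && (phi i x \in S)]]| * #|W| <= #|P| * #|S| * #|T|.
Proof.
move=> phiD phi_onto.
apply: leq_trans (leq_mul (card_cover_le (P := fun i x => P i && (phi i x \in S)) _)
                          (leqnn _)) _ => [x|].
  by rewrite inE => /existsP.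
rewrite big_distrl /= -mulnA -sum_nat_const [X in _ <= X]big_mkcond /=.
apply: leq_sum => i _; case: ifP; rewrite unfold_in => Pi; last first.
  by rewrite (eq_card (B := pred0)) ?card0 // => x; rewrite !inE Pi.
rewrite (eq_card (B := [set x | phi i x \in S])) => [|x]; last by rewrite !inE Pi.
by rewrite card_preimset_additive //; [apply: phiD | apply: phi_onto].
Qed.

Lemma mulmx_row_onto c n (u : 'rV[F2]_c) : u != 0%R ->
  forall w : 'rV[F2]_n, exists A : 'M_(c, n), (u *m A)%R = w.
Proof.
move=> u_neq0 w; have [j uj] : exists j, u ord0 j != 0%R.
  apply/existsP; apply: contraR u_neq0 => /existsPn u0.
  by apply/eqP/rowP => j; rewrite mxE; apply/eqP/negPn/u0.
exists (\matrix_(i, l) if i == j then (u ord0 j)^-1 * w ord0 l else 0)%R.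
apply/rowP => l; rewrite !mxE (bigD1 j) //= big1 ?addr0 => [|i /negbTE ij].
  by rewrite mxE eqxx mulrA mulfV // mul1r.
by rewrite mxE ij mulr0.
Qed.

Lemma mulmx_trmx_usubmx_onto s k n (z : 'rV[F2]_n) : z != 0%R ->
  forall w : 'rV[F2]_s, exists G : 'M_(s + k, n), (z *m (usubmx G)^T)%R = w.
Proof.
move=> z_neq0 w; have [A zA] := mulmx_row_onto z_neq0 w.
by exists (col_mx A^T 0%R); rewrite col_mxKu trmxK.
Qed.

(* The fraction of bad matrices is at most 2^(s+k) L / 2^n + L / 2^s = 2 L / 2^s < 1,
   where L is the volume of the Hamming ball. *)
Lemma exists_good_generator s k n e : n = s + k + s ->
  2 * #|hamming_ball n e| < 2 ^ s ->
  exists G : 'M[F2]_(s + k, n),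
    (forall u, u != 0%R -> e < wH (u *m G)%R) /\
    (forall z, z != 0%R -> (z *m (usubmx G)^T)%R = 0%R -> e < wH z).
Proof.
move=> n_eq ball_lt; set ball := hamming_ball n e.
set T := #|{: 'M[F2]_(s + k, n)}|.
have := @card_exists_preimset_le _ _ _ (predC1 0%R)
  (fun u (G : 'M[F2]_(s + k, n)) => u *m G)%R ball
  (fun u _ => mulmxDr u) (fun u => @mulmx_row_onto _ _ u).
set bad_gen := [set G | _] => card_gen.
have := @card_exists_preimset_le _ _ _ [pred z | (z != 0%R) && (z \in ball)]
  (fun z (G : 'M[F2]_(s + k, n)) => z *m (usubmx G)^T)%R [set 0%R]
  (fun z _ G1 G2 => ltac:(by rewrite /= !linearD))
  (fun z => ltac:(by case/andP => z_neq0 _; apply: mulmx_trmx_usubmx_onto)).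
set bad_chk := [set G | _] => card_chk.
have {}card_gen : #|bad_gen| * 2 ^ s <= #|ball| * T.
  rewrite -(@leq_pmul2l (2 ^ (s + k))) ?expn_gt0 // mulnCA -expnD -n_eq.
  apply: leq_trans (leq_trans (eq_leq _) card_gen) _.
    by rewrite card_mx card_Fp // mul1n.
  rewrite -mulnA leq_mul2r; apply/orP; right.
  by apply: leq_trans (max_card _) _; rewrite card_mx card_Fp // mul1n.
have {}card_chk : #|bad_chk| * 2 ^ s <= #|ball| * T.
  apply: leq_trans (leq_trans (eq_leq _) card_chk) _.
    by rewrite card_mx card_Fp // mul1n.
  rewrite cards1 muln1 leq_mul2r; apply/orP; right.
  by apply/subset_leq_card/subsetP => z; rewrite !inE => /andP[].
have : ~~ ([set: 'M[F2]_(s + k, n)] \subset bad_gen :|: bad_chk).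
  apply/negP => /subset_leq_card; rewrite cardsT -/T; apply/negP; rewrite -ltnNge.
  rewrite -(@ltn_pmul2r (2 ^ s)) ?expn_gt0 //.
  apply: leq_ltn_trans (leq_mul (leq_card_setU _ _) (leqnn _)) _.
  rewrite mulnDl; apply: leq_ltn_trans (leq_add card_gen card_chk) _.
  rewrite addnn -mul2n mulnA [T * _]mulnC ltn_pmul2r //.
  by rewrite /T card_mx card_Fp // expn_gt0.
case/subsetPn => G _; rewrite in_setU negb_or !inE => /andP[/existsPn gen /existsPn chk].
exists G; split=> [u u_neq0|z z_neq0 zG]; rewrite ltnNge; apply/negP => light.
  by have := gen u; rewrite /= u_neq0 inE light.
by have := chk z; rewrite /= z_neq0 zG !inE light eqxx.
Qed.

Local Open Scope ring_scope.

Lemma symp0 n (y : vec n) : symp 0 y = 0.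
Proof. by rewrite /symp /xc /zc !big1 ?subr0 // => i _; rewrite mxE mul0r. Qed.

Lemma symp_row_mx n (x : vec n) (a b : 'rV[F2]_n) :
  symp x (row_mx a b) = \sum_i lsubmx x 0 i * b 0 i - \sum_i rsubmx x 0 i * a 0 i.
Proof.
by rewrite /symp /xc /zc; congr (_ - _); apply: eq_bigr => i _;
  rewrite ?row_mxEl ?row_mxEr !mxE.
Qed.

Lemma wH_lsubmx_le_sweight n (y : vec n) : (wH (lsubmx y) <= sweight y)%N.
Proof.
apply/subset_leq_card/subsetP => i; rewrite !inE mxE /xc.
by apply: contra => /eqP [-> _].
Qed.

Lemma wH_rsubmx_le_sweight n (y : vec n) : (wH (rsubmx y) <= sweight y)%N.
Proof.
apply/subset_leq_card/subsetP => i; rewrite !inE mxE /zc.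
by apply: contra => /eqP [_ ->].
Qed.

Definition sperpb n (C : {vspace vec n}) (x : vec n) : bool :=
  [forall y, (y \in C) ==> (symp x y == 0)].

Lemma sperpP n (C : {vspace vec n}) x : reflect (in_sperp C x) (sperpb C x).
Proof.
apply: (iffP forallP) => [h y yC|h y]; first by have := h y; rewrite yC => /eqP.
by apply/implyP => /h ->.
Qed.

Lemma exists_stabilizer_code n k (C : {vspace vec n}) :
  \dim C = (n + k)%N -> (forall x, in_sperp C x -> x \in C) ->
  (exists x, x \in C /\ ~ in_sperp C x) ->
  exists d, stabilizer_code k d C.
Proof.
move=> dimC sperpC [x0 [x0C x0N]].
have exP : exists d, [exists x, [&& x \in C, ~~ sperpb C x & sweight x == d]].
  exists (sweight x0); apply/existsP; exists x0.
  by rewrite x0C eqxx andbT; apply/sperpP.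
case: (ex_minnP exP) => d /existsP [x /and3P [xC /sperpP xN /eqP <-]] dmin.
exists (sweight x); split => // [|y yC yN]; first by exists x.
by apply: dmin; apply/existsP; exists y; rewrite yC eqxx andbT; apply/sperpP.
Qed.

Lemma stabilizer_code_dist_gt n k d e (C : {vspace vec n}) :
  stabilizer_code k d C -> (forall x, x \in C -> x != 0 -> (e < sweight x)%N) ->
  (e < d)%N.
Proof.
case=> _ _ [x [xC xN] <-] _ heavy; apply: heavy => //.
by apply: contra_notN xN => /eqP ->; move=> y _; exact: symp0.
Qed.

Section CSSCode.
Variables s k n : nat.
Variable G : 'M[F2]_(s + k, n).
Let H := usubmx G.

(* limg css_x = row(G) x 0 and lker css_z = 0 x row(H)^perp. *)
Definition css_x : 'Hom('rV[F2]_(s + k), vec n) := linfun (mulmxr (row_mx G 0)).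
Definition css_z : 'Hom(vec n, 'rV[F2]_(n + s)) :=
  linfun (mulmxr (block_mx 1%:M 0 0 H^T)).
Definition css : {vspace vec n} := (limg css_x + lker css_z)%VS.

Lemma css_xE u : css_x u = row_mx (u *m G) 0.
Proof. by rewrite lfunE /= mul_mx_row mulmx0. Qed.

Lemma css_zE y : css_z y = row_mx (lsubmx y) (rsubmx y *m H^T).
Proof.
by rewrite lfunE /= -{1}(hsubmxK y) mul_row_block !mulmx0 mulmx1 addr0 add0r.
Qed.

Lemma mem_css y :
  y \in css <-> (exists u, lsubmx y = u *m G) /\ rsubmx y *m H^T = 0.
Proof.
split.
  case/memv_addP => _ /memv_imgP [u _ ->] [b]; rewrite memv_ker css_zE => /eqP b0 ->.
  have [b1 b2] := eq_row_mx (etrans b0 (esym (row_mx0 _ _ _ _))).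
  rewrite css_xE linearD /= linearD /= row_mxKl row_mxKr b1 addr0 add0r.
  by split; first exists u.
case=> [[u yu] yH]; apply/memv_addP; exists (css_x u); first exact: memv_img (memvf _).
exists (row_mx 0 (rsubmx y)).
  by rewrite memv_ker css_zE row_mxKl row_mxKr yH row_mx0.
by rewrite css_xE add_row_mx addr0 add0r -yu hsubmxK.
Qed.

Lemma css_sperp_rsubmx x : in_sperp css x -> rsubmx x *m H^T = 0.
Proof.
move=> xN; apply/rowP => j; rewrite !mxE.
have yC : row_mx ('e_(lshift k j) *m G) 0 \in css.
  by apply/mem_css; rewrite row_mxKl row_mxKr mul0mx; split; first eexists.
have := xN _ yC; rewrite symp_row_mx big1 ?sub0r => [|i _]; last first.
  by rewrite [X in _ * X]mxE mulr0.
move/eqP; rewrite oppr_eq0 => /eqP xe; rewrite -[RHS]xe; apply: eq_bigr => i _.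
by rewrite -rowE -row_usubmx !mxE.
Qed.

(* x is orthogonal to every (0, z) with z in row(H)^perp, so its X-part lies in
   row(H)^perp^perp = row(H). *)
Lemma css_sperp_lsubmx x : in_sperp css x -> exists w, lsubmx x = w *m H.
Proof.
move=> xN; set a := lsubmx x; set K := kermx H^T.
have orth (z : 'rV[F2]_n) : z *m H^T = 0 -> z *m a^T = 0.
  move=> zH; have yC : row_mx 0 z \in css.
    by apply/mem_css; rewrite row_mxKl row_mxKr zH; split; first by exists 0; rewrite mul0mx.
  have := xN _ yC; rewrite symp_row_mx [X in _ - X]big1 ?subr0 => [xz|i _]; last first.
    by rewrite [X in _ * X]mxE mulr0.
  apply/rowP => j; rewrite !mxE (ord1 j) -[RHS]xz.
  by apply: eq_bigr => i _; rewrite !mxE mulrC.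
have Ka : K *m a^T = 0.
  by apply/row_matrixP => i; rewrite row_mul row0 orth // -row_mul mulmx_ker row0.
have aK : (a <= kermx K^T)%MS.
  by apply/sub_kermxP; rewrite -[a]trmxK -trmx_mul Ka trmx0.
have HK : (H <= kermx K^T)%MS.
  by apply/sub_kermxP; rewrite -[H]trmxK -trmx_mul mulmx_ker trmx0.
have rankK : \rank (kermx K^T) = \rank H.
  rewrite mxrank_ker mxrank_tr mxrank_ker mxrank_tr subKn //.
  by rewrite -mxrank_tr rank_leq_row.
have aH : (a <= H)%MS.
  by rewrite (submx_trans aK) // -(mxrank_leqif_sup HK).2 rankK.
by exists (a *m pinvmx H); rewrite mulmxKpV.
Qed.

Lemma sperp_sub_css x : in_sperp css x -> x \in css.
Proof.
move=> xN; apply/mem_css; split; last exact: css_sperp_rsubmx.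
have [w xw] := css_sperp_lsubmx xN.
by exists (row_mx w 0); rewrite xw -[G in RHS](vsubmxK G) mul_row_col mul0mx addr0.
Qed.

Hypothesis n_eq : n = (s + k + s)%N.
Hypothesis G_inj : forall u : 'rV_(s + k), u *m G = 0 -> u = 0.

Lemma dim_css : \dim css = (n + k)%N.
Proof.
have disj : (limg css_x :&: lker css_z = 0)%VS.
  apply/eqP; rewrite -subv0; apply/subvP => y; rewrite memv_cap memv0.
  case/andP => /memv_imgP [u _ ->]; rewrite memv_ker css_zE css_xE row_mxKl.
  move=> /eqP /(fun h => etrans h (esym (row_mx0 _ _ _ _))) /eq_row_mx [uG _].
  by rewrite uG row_mx0.
have dim_x : \dim (limg css_x) = (s + k)%N.
  rewrite limg_dim_eq ?dimvf ?dim_matrix ?mul1r // capfv.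
  apply/eqP/lker0P => u w; rewrite !css_xE => /eq_row_mx [uw _].
  by apply/eqP; rewrite -subr_eq0; apply/eqP/G_inj; rewrite mulmxBl uw subrr.
have H_free : row_free H.
  apply: inj_row_free => w wH0; have /G_inj : row_mx w 0 *m G = 0.
    by rewrite -{1}(vsubmxK G) mul_row_col mul0mx addr0.
  by move/(fun h => etrans h (esym (row_mx0 _ _ _ _))) => /eq_row_mx [].
have z_onto : (limg css_z = fullv)%VS.
  apply/eqP; rewrite eqEsubv subvf /=; apply/subvP => w _; apply/memv_imgP.
  have wH : (rsubmx w <= H^T)%MS by apply: submx_full; rewrite /row_full mxrank_tr.
  exists (row_mx (lsubmx w) (rsubmx w *m pinvmx H^T)); first exact: memvf.
  by rewrite css_zE row_mxKl row_mxKr mulmxKpV // hsubmxK.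
have dim_z : \dim (lker css_z) = (n - s)%N.
  have := limg_ker_dim css_z fullv; rewrite capfv z_onto !dimvf !dim_matrix !mul1r.
  by move: (\dim (lker css_z)) => a; lia.
by rewrite /css dimv_disjoint_sum // dim_x dim_z; lia.
Qed.

Hypothesis k_gt0 : (0 < k)%N.

Lemma exists_css_logical : exists x, x \in css /\ ~ in_sperp css x.
Proof.
pose v : 'rV[F2]_k := const_mx 1.
have v_neq0 : v != 0.
  by apply/eqP => /rowP /(_ (Ordinal k_gt0)); rewrite !mxE => /eqP; rewrite oner_eq0.
exists (row_mx (row_mx 0 v *m G) 0); split.
  by apply/mem_css; rewrite row_mxKl row_mxKr mul0mx; split; first eexists.
case/css_sperp_lsubmx => w; rewrite row_mxKl => vw.
have /G_inj/eqP : (row_mx 0 v - row_mx w 0) *m G = 0.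
  by rewrite mulmxBl vw -[G in X in _ - X](vsubmxK G) mul_row_col mul0mx addr0 subrr.
rewrite subr_eq0 => /eqP /eq_row_mx [_ v0].
by rewrite v0 eqxx in v_neq0.
Qed.

End CSSCode.

Lemma css_sweight_gt s k n e (G : 'M[F2]_(s + k, n)) :
  (forall u, u != 0 -> (e < wH (u *m G))%N) ->
  (forall z, z != 0 -> z *m (usubmx G)^T = 0 -> (e < wH z)%N) ->
  forall y, y \in css G -> y != 0 -> (e < sweight y)%N.
Proof.
move=> G_heavy H_dual_heavy y /mem_css [[u yu] yH] y_neq0.
have [l0|l_neq0] := eqVneq (lsubmx y) 0.
  have r_neq0 : rsubmx y != 0.
    by apply: contra y_neq0 => /eqP r0; rewrite -(hsubmxK y) l0 r0 row_mx0.
  exact: leq_trans (H_dual_heavy _ r_neq0 yH) (wH_rsubmx_le_sweight y).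
have u_neq0 : u != 0 by apply: contra l_neq0 => /eqP u0; rewrite yu u0 mul0mx.
by apply: leq_trans (wH_lsubmx_le_sweight y); rewrite yu; apply: G_heavy.
Qed.

Lemma css_stabilizer_code s k n e (G : 'M[F2]_(s + k, n)) :
  n = (s + k + s)%N -> (0 < k)%N ->
  (forall u, u != 0 -> (e < wH (u *m G))%N) ->
  (forall z, z != 0 -> z *m (usubmx G)^T = 0 -> (e < wH z)%N) ->
  exists d, stabilizer_code k d (css G) /\ (e < d)%N.
Proof.
move=> n_eq k_gt0 G_heavy H_dual_heavy.
have G_inj (u : 'rV_(s + k)) : u *m G = 0 -> u = 0.
  move=> uG; apply/eqP; apply: contraT => /G_heavy.
  by rewrite uG /wH (eq_card (B := pred0)) ?card0 // => i; rewrite !inE mxE eqxx.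
have [d code] := exists_stabilizer_code (dim_css n_eq G_inj) (@sperp_sub_css _ _ _ G)
  (exists_css_logical G_inj k_gt0).
by exists d; split; last exact: stabilizer_code_dist_gt code (css_sweight_gt _ _).
Qed.

Lemma exists_stabilizer_code_dist_gt s n e : (2 * s < n)%N ->
  (2 * #|hamming_ball n e| < 2 ^ s)%N ->
  exists (C : {vspace vec n}) d, stabilizer_code (n - 2 * s) d C /\ (e < d)%N.
Proof.
move=> s_lt ball_lt; set k := (n - 2 * s)%N.
have n_eq : n = (s + k + s)%N by rewrite /k; lia.
have k_gt0 : (0 < k)%N by rewrite /k; lia.
have [G [G_heavy H_dual_heavy]] := exists_good_generator n_eq ball_lt.
have [d [code e_lt]] := css_stabilizer_code n_eq k_gt0 G_heavy H_dual_heavy.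
by exists (css G), d.
Qed.

Lemma double_card_hamming_ball_lt m n e :
  (2 * #|hamming_ball n e| < 2 ^ (m.+1 * e + n %/ 2 ^ m + 3))%N.
Proof.
apply: leq_ltn_trans (leq_mul (leqnn 2) (card_hamming_ball_le n e (expn_gt0 2 m))) _.
by rewrite -[(2 * 2 ^ m)%N]expnS -expnM -expnD -expnS ltn_exp2l //; lia.
Qed.

Definition alternant_rate (R : realType) m (delta : R) :=
  1 - 10 / 3 * m%:R * delta - 2 / (2 ^+ m - 1).

Definition alternant_redundancy (R : realType) m (delta : R) n :=
  (m.+1 * Num.truncn (delta * n%:R) + n %/ 2 ^ m + 3)%N.

Section AlternantRate.
Variables (R : realType) (m : nat) (delta : R).
Hypotheses (m_ge2 : (2 <= m)%N) (delta_ge0 : 0 <= delta).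

Local Notation rate := (alternant_rate m delta).
Local Notation redundancy := (alternant_redundancy m delta).

Lemma four_le_exp2 : 4 <= 2 ^+ m :> R.
Proof. by rewrite -natrX (ler_nat R 4) (@leq_trans (2 ^ 2)) // leq_pexp2l. Qed.

Lemma alternant_rate_gt0 :
  delta < (2 * m%:R)^-1 * (2^-1 - (2 ^+ m - 1)^-1) -> 0 < rate.
Proof.
move=> delta_lt; have X4 := four_le_exp2.
have m2 : 2 <= m%:R :> R by rewrite (ler_nat R 2).
set t := (2 ^+ m - 1 : R)^-1 in delta_lt *.
have tK : (2 ^+ m - 1) * t = 1 by rewrite mulfV //; apply/eqP => X1; lra.
have t3 : 3 * t <= 1 by nra.
have md_lt : 2 * (m%:R * delta) < 2^-1 - t.
  have mK : (2 * m%:R) * (2 * m%:R)^-1 = 1 :> R by rewrite mulfV //; apply/eqP => m0; lra.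
  have : 0 < (2 * m%:R) * ((2 * m%:R)^-1 * (2^-1 - t) - delta) by apply: mulr_gt0; lra.
  by rewrite mulrBr [X in 0 < X - _]mulrA mK mul1r -mulrA; lra.
by rewrite /alternant_rate -mulrA [2 / _]mulrC -/t; lra.
Qed.

Lemma alternant_redundancy_le n :
  2 * (redundancy n)%:R <= n%:R * (1 - rate) + 6.
Proof.
have X4 := four_le_exp2.
have m2 : 2 <= m%:R :> R by rewrite (ler_nat R 2).
have n_ge0 : 0 <= n%:R :> R by [].
set t := (2 ^+ m - 1 : R)^-1.
have t_ge : (2 ^+ m : R)^-1 <= t by rewrite lef_pV2 ?posrE; lra.
set e := Num.truncn (delta * n%:R).
have e_le : e%:R <= delta * n%:R by rewrite truncn_le mulr_ge0.
have q_le : (n %/ 2 ^ m)%:R <= n%:R * t :> R.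
  apply: le_trans (ler_wpM2l n_ge0 t_ge); rewrite -/(n%:R / 2 ^+ m) ler_pdivlMr; last lra.
  by rewrite -natrX -natrM ler_nat leq_divM.
have me_le : 2 * (m.+1%:R * e%:R) <= 10 / 3 * (m%:R * (delta * n%:R)) :> R.
  rewrite mulrA [X in _ <= X]mulrA; apply: le_trans (ler_wpM2l _ e_le) _.
    by rewrite mulr_ge0.
  by rewrite ler_wpM2r ?mulr_ge0 // -natr1; lra.
have -> : n%:R * (1 - rate) = 10 / 3 * (m%:R * (delta * n%:R)) + 2 * (n%:R * t).
  by rewrite /alternant_rate /t; ring.
rewrite /alternant_redundancy 2!natrD natrM -/e; move: me_le q_le.
move: (m.+1%:R * e%:R) (10 / 3 * _) ((n %/ 2 ^ m)%:R) (n%:R * t) => a b c d.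
lra.
Qed.

Lemma alternant_code n : 6 < n%:R * rate ->
  exists k d (C : {vspace vec n}), stabilizer_code k d C /\
    rate - 6 / n%:R <= k%:R / n%:R /\ delta * n%:R < d%:R.
Proof.
move=> n_large; have red_le := alternant_redundancy_le n.
have n_gt0 : 0 < n%:R :> R.
  by rewrite ltr0n lt0n; apply: contraTneq n_large => ->; rewrite mul0r; lra.
have red_lt : (2 * redundancy n < n)%N.
  by rewrite -(ltr_nat R) natrM; lra.
have ball_lt := double_card_hamming_ball_lt m n (Num.truncn (delta * n%:R)).
rewrite -/(alternant_redundancy m delta n) in ball_lt.
have [C [d [code e_lt]]] := exists_stabilizer_code_dist_gt red_lt ball_lt.
exists (n - 2 * redundancy n)%N, d, C; split; first exact: code.
split.
  rewrite ler_pdivlMr // (natrB _ (ltnW red_lt)) mulrBl divfK ?lt0r_neq0 // natrM.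
  lra.
apply: lt_le_trans (truncnS_gt _) _; rewrite ler_nat; exact: e_lt.
Qed.

End AlternantRate.

Lemma ltr_nat_truncnS (R : realType) (x : R) n : (Num.truncn x < n)%N -> x < n%:R.
Proof. by move=> lt_xn; apply: lt_le_trans (truncnS_gt x) _; rewrite ler_nat. Qed.

Lemma asymptotic_code_family (R : realType) (rate delta c : R) : 0 < rate ->
  (forall n, c < n%:R * rate -> exists k d (C : {vspace vec n}), stabilizer_code k d C /\
     rate - c / n%:R <= k%:R / n%:R /\ delta * n%:R < d%:R) ->
  exists (N k d : nat -> nat) (C : forall i, {vspace vec (N i)}),
    (forall i, stabilizer_code (k i) (d i) (C i)) /\
    (forall M : nat, exists i0 : nat, forall i, (i0 <= i)%N -> (M <= N i)%N) /\
    (forall eps : R, 0 < eps -> exists i0 : nat, forall i, (i0 <= i)%N ->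
       rate - eps <= (k i)%:R / (N i)%:R) /\
    (forall eps : R, 0 < eps -> exists i0 : nat, forall i, (i0 <= i)%N ->
       delta - eps <= (d i)%:R / (N i)%:R).
Proof.
move=> rate_gt0 codes.
pose N i := (i + (Num.truncn (c / rate)).+1)%N.
have N_ge i : (i <= N i)%N by rewrite leq_addr.
have N_gt0 i : 0 < (N i)%:R :> R by rewrite ltr0n /N addnS.
have code i : {k & {d & {C : {vspace vec (N i)} | stabilizer_code k d C /\
    rate - c / (N i)%:R <= k%:R / (N i)%:R /\ delta * (N i)%:R < d%:R}}}.
  have N_large : c < (N i)%:R * rate.
    by rewrite -ltr_pdivrMr //; apply: ltr_nat_truncnS; rewrite ltn_addl.
  have /boolp.cid[k /boolp.cid[d /boolp.cid[C kdC]]] := codes _ N_large.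
  by exists k, d, C.
exists N, (fun i => projT1 (code i)), (fun i => projT1 (projT2 (code i))),
  (fun i => sval (projT2 (projT2 (code i)))).
split; first by move=> i; case: (code i) => k [d [C []]].
split; first by move=> M; exists M => i /leq_trans; apply.
split=> eps eps_gt0; last first.
  exists 0%N => i _; case: (code i) => k [d [C [_ [_ dist]]]] /=.
  have : 0 < eps * (N i)%:R by rewrite mulr_gt0.
  by rewrite ler_pdivlMr // mulrBl; lra.
exists (Num.truncn (c / eps)).+1 => i le_i.
case: (code i) => k [d [C [_ [rate_le _]]]] /=.
have : c / (N i)%:R < eps.
  rewrite ltr_pdivrMr // mulrC -ltr_pdivrMr //.
  exact/ltr_nat_truncnS/(leq_trans le_i).
lra.
Qed.

Theorem mainTheorem5 (R : realType) (m : nat) (delta : R) :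
  (2 <= m)%N ->
  0 <= delta ->
  delta < (2 * m%:R)^-1 * (2^-1 - (2 ^+ m - 1)^-1) ->
  exists (N k d : nat -> nat) (C : forall i, {vspace vec (N i)}),
    (forall i, stabilizer_code (k i) (d i) (C i)) /\
    (forall M : nat, exists i0 : nat, forall i, (i0 <= i)%N -> (M <= N i)%N) /\
    (forall eps : R, 0 < eps -> exists i0 : nat, forall i, (i0 <= i)%N ->
       1 - 10 / 3 * m%:R * delta - 2 / (2 ^+ m - 1) - eps <= (k i)%:R / (N i)%:R) /\
    (forall eps : R, 0 < eps -> exists i0 : nat, forall i, (i0 <= i)%N ->
       delta - eps <= (d i)%:R / (N i)%:R).
Proof.
move=> m_ge2 delta_ge0 delta_lt; rewrite -/(alternant_rate m delta).
exact: asymptotic_code_family (alternant_rate_gt0 m_ge2 delta_lt)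
  (alternant_code m_ge2 delta_ge0).
Qed.
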